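(* Let $a,b\in\mathbb{N}$ with $a+b$ even, and let $n$ be a positive integer. Then $$2n\ \Big|\ \sum_{k=0}^{n-1}\binom{n-1}{k}^a\binom{-n-1}{k}^b\binom{2k}{k}(k+2)3^{n-1-k}.$$
   Context: $\binom{x}{k}=x(x-1)\cdots(x-k+1)/k!$ for any integer $x$. *)

From mathcomp Require Import all_boot all_order all_algebra.
Set Implicit Arguments. Unset Strict Implicit. Unset Printing Implicit Defensive.
Import Order.TTheory GRing.Theory Num.Theory.
Local Open Scope ring_scope.

Definition binq (x : int) (k : nat) : rat :=
  (\prod_(i < k) ((x - i%:Z)%:~R : rat)) / (k`!)%:R.

(* With W(m) = m C(2m, m) one has (k + 2) C(2k, k) = W(k+1) - 3 W(k), so summation
   by parts against the weights 3^(n-1-k) rewrites the sum as y(n) W(n) plus a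
   combination of the terms W(m+1) (y(m) - y(m+1)), where y(k) is the binomial
   factor of the k-th summand.  Since W(m+1) = 2 (m+1) C(2m+1, m), everything is
   divisible by 2n as soon as n divides (m+1) (y(m) - y(m+1)) for all m.  This
   property is stable under products and holds for (-1)^k C(n-1, k) and for
   C(n+k, k) by the absorption identities; as C(-n-1, k) = (-1)^k C(n+k, k) and
   a + b is even, y(k) = ((-1)^k C(n-1, k))^a C(n+k, k)^b. *)

From mathcomp Require Import all_boot all_order all_algebra.
From mathcomp Require Import ring zify.
Set Implicit Arguments. Unset Strict Implicit. Unset Printing Implicit Defensive.
Import Order.TTheory GRing.Theory Num.Theory.
Local Open Scope ring_scope.

Lemma binq_ffact (x : int) (k : nat) (c : int) :
  \prod_(i < k) (x - i%:Z) = c * (k`!)%:Z -> binq x k = c%:~R.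
Proof.
move=> prodE; rewrite /binq.
have -> : \prod_(i < k) ((x - i%:Z)%:~R : rat) = (\prod_(i < k) (x - i%:Z))%:~R.
  by rewrite rmorph_prod.
rewrite prodE intrM mulfK //.
by rewrite intr_eq0 -lt0n fact_gt0.
Qed.

Lemma prod_sub_nat (m k : nat) : \prod_(i < k) (m%:Z - i%:Z) = (m ^_ k)%:Z.
Proof.
elim: k => [|k IH]; first by rewrite big_ord0.
rewrite big_ord_recr /= IH ffactnSr PoszM.
have [km|mk] := leqP k m; first by rewrite subzn.
by rewrite ffact_small // mul0r.
Qed.

Lemma prod_sub_negz (n k : nat) :
  \prod_(i < k) (- n%:Z - 1 - i%:Z) = (-1) ^+ k * ((n + k) ^_ k)%:Z.
Proof.
elim: k => [|k IH]; first by rewrite big_ord0 expr0 mulr1.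
rewrite big_ord_recr /= IH addnS ffactSS PoszM exprS -addn1 !PoszD.
ring.
Qed.

Lemma binq_nat (m k : nat) : binq m%:Z k = 'C(m, k)%:R.
Proof. by rewrite (@binq_ffact _ _ 'C(m, k)) // prod_sub_nat -bin_ffact PoszM. Qed.

Lemma binq_negz (n k : nat) :
  binq (- n%:Z - 1) k = (-1) ^+ k * 'C(n + k, k)%:R.
Proof.
rewrite (@binq_ffact _ _ ((-1) ^+ k * 'C(n + k, k)%:Z)) ?rmorphM ?rmorphXn ?rmorphN1 //.
by rewrite prod_sub_negz -bin_ffact PoszM mulrA.
Qed.

Definition central_weight (m : nat) : nat := (m * 'C(2 * m, m))%N.

Lemma central_weightS (m : nat) :
  central_weight m.+1 = (2 * m.+1 * 'C((2 * m).+1, m))%N.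
Proof.
have m2S : (2 * m.+1 = (2 * m).+2)%N by lia.
by rewrite /central_weight m2S -mul_bin_diag /=; ring.
Qed.

Lemma central_weight_rec (m : nat) :
  ((m + 2) * 'C(2 * m, m) + 3 * central_weight m)%N = central_weight m.+1.
Proof.
have down := mul_bin_down (2 * m).+1 m.
rewrite /= (_ : (2 * m).+1 - m = m.+1)%N in down; last by lia.
by rewrite central_weightS -mulnA -down /central_weight; ring.
Qed.

Lemma sum_by_parts (R : comNzRingType) (c : R) (y B : nat -> R) (N : nat) :
  \sum_(k < N) c ^+ (N - k.+1) * (y k * (B k.+1 - c * B k))
  = y N * B N - c ^+ N * (y 0%N * B 0%N)
    + \sum_(k < N) c ^+ (N - k.+1) * (B k.+1 * (y k - y k.+1)).
Proof.
elim: N => [|N IH]; first by rewrite !big_ord0 expr0 mul1r subrr addr0.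
have scale F : \sum_(k < N) c ^+ (N.+1 - k.+1) * F k
               = c * \sum_(k < N) c ^+ (N - k.+1) * F k.
  rewrite mulr_sumr; apply: eq_bigr => k _.
  by rewrite subSS -(subnSK (ltn_ord k)) exprS mulrA.
by rewrite !big_ord_recr /= subnn expr0 !scale IH exprS; ring.
Qed.

Definition scaled_diff_dvd (d : int) (f : nat -> int) : Prop :=
  forall m : nat, (d %| m.+1%:Z * (f m - f m.+1))%Z.

Lemma scaled_diff_dvdM (d : int) (f g : nat -> int) :
  scaled_diff_dvd d f -> scaled_diff_dvd d g ->
  scaled_diff_dvd d (fun m => f m * g m).
Proof.
move=> df dg m.
have -> : m.+1%:Z * (f m * g m - f m.+1 * g m.+1)
          = g m * (m.+1%:Z * (f m - f m.+1)) + f m.+1 * (m.+1%:Z * (g m - g m.+1)).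
  by ring.
by apply: rpredD; apply: dvdz_mull.
Qed.

Lemma scaled_diff_dvdX (d : int) (f : nat -> int) (e : nat) :
  scaled_diff_dvd d f -> scaled_diff_dvd d (fun m => f m ^+ e).
Proof.
move=> df; elim: e => [|e IH] m; first by rewrite !expr0 subrr mulr0 dvdz0.
by rewrite !exprS; exact: (scaled_diff_dvdM df IH m).
Qed.

Lemma scaled_diff_dvd_signed_bin (n : nat) :
  scaled_diff_dvd n.+1 (fun m => (-1) ^+ m * 'C(n, m)%:Z).
Proof.
move=> m.
have -> : m.+1%:Z * ((-1) ^+ m * 'C(n, m)%:Z - (-1) ^+ m.+1 * 'C(n, m.+1)%:Z)
          = (-1) ^+ m * (m.+1 * 'C(n.+1, m.+1))%N%:Z.
  by rewrite binS PoszM PoszD exprS; ring.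
by rewrite -mul_bin_diag PoszM mulrCA dvdz_mulr.
Qed.

Lemma scaled_diff_dvd_bin_shift (n : nat) :
  scaled_diff_dvd n (fun m => 'C(n + m, m)%:Z).
Proof.
move=> m.
have -> : m.+1%:Z * ('C(n + m, m)%:Z - 'C(n + m.+1, m.+1)%:Z)
          = - (m.+1 * 'C(n + m, m.+1))%N%:Z.
  by rewrite addnS binS PoszM PoszD; ring.
by rewrite mul_bin_left addnK PoszM rpredN dvdz_mulr.
Qed.

Lemma dvd_sum_central_bin (n : nat) (y : nat -> int) :
  scaled_diff_dvd n y ->
  ((2 * n)%N %| \sum_(k < n) 3 ^+ (n - k.+1) * (y k * ((k + 2) * 'C(2 * k, k))%N%:Z))%Z.
Proof.
move=> dy; pose B m := (central_weight m)%:Z.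
have recE k : ((k + 2) * 'C(2 * k, k))%N%:Z = B k.+1 - 3 * B k.
  by rewrite /B -central_weight_rec PoszD (PoszM 3) -(natz 3) addrK.
under eq_bigr do rewrite recE.
have B0 : B 0%N = 0 by [].
rewrite sum_by_parts B0 !mulr0 subr0.
apply: rpredD.
  case: n dy => [|n] _; first by rewrite /B /central_weight mul0n mulr0 dvdz0.
  by rewrite /B central_weightS -mulnA !PoszM mulrA; apply/dvdz_mull/dvdz_mulr.
apply: rpred_sum => k _.
rewrite /B central_weightS !PoszM.
have -> : 3 ^+ (n - k.+1) * ((2 * k.+1%:Z * 'C((2 * k).+1, k)%:Z) * (y k - y k.+1))
          = (2 * (3 ^+ (n - k.+1) * 'C((2 * k).+1, k)%:Z)) * (k.+1%:Z * (y k - y k.+1)).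
  by ring.
by apply: dvdz_mul; [apply: dvdz_mulr | apply: dy].
Qed.

Theorem lemma3p4 (a b n : nat) (hab : ~~ odd (a + b)%N) (hn : (0 < n)%N) :
  (\sum_(k < n) binq (n.-1)%:Z k ^+ a * binq (- (n%:Z) - 1) k ^+ b
      * binq (2 * k)%N%:Z k * (k + 2)%:R * 3%:R ^+ (n.-1 - k)%N)
    / (2 * n)%N%:R \is a Num.int.
Proof.
case: n hn => // n _.
pose u m := (-1) ^+ m * 'C(n, m)%:Z.
pose v m := 'C(n.+1 + m, m)%:Z.
pose y m := u m ^+ a * v m ^+ b.
have odd_ab : odd b = odd a by move: hab; rewrite oddD; case: (odd a); case: (odd b).
have sign_ab : (-1) ^+ b = (-1) ^+ a :> rat by rewrite -signr_odd odd_ab signr_odd.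
have summandE (k : 'I_n.+1) :
    binq n.+1.-1 k ^+ a * binq (- n.+1%:Z - 1) k ^+ b * binq (2 * k)%N k
      * (k + 2)%:R * 3%:R ^+ (n.+1.-1 - k)
    = (3 ^+ (n.+1 - k.+1) * (y k * ((k + 2) * 'C(2 * k, k))%N%:Z))%:~R.
  rewrite !binq_nat binq_negz exprMn exprAC sign_ab exprAC subSS /=.
  rewrite /y /u /v !(rmorphM, rmorphXn) /= rmorphN1 rmorph_nat -!pmulrn exprMn.
  ring.
rewrite (eq_bigr _ (fun k _ => summandE k)) -rmorph_sum.
apply: (@Qint_dvdz _ (2 * n.+1)%N); apply: dvd_sum_central_bin.
apply: scaled_diff_dvdM; apply: scaled_diff_dvdX.
  exact: scaled_diff_dvd_signed_bin.
exact: scaled_diff_dvd_bin_shift.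
Qed.
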